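(* Let $S$ be a numerical semigroup, $D=S^*+S^*$, $X$ its set of nonzero Apéry elements, and $V$ the vertex set of $G(S)$. Then $V$ is a downset in $S^*$, and $V$ coincides with the set of all proper factors of the elements of $X\cap D$, i.e. $V=\{v\in S^*: \exists\, z\in X\cap D,\ z-v\in S^*\}$.
   Context: A numerical semigroup is a subset $S\subseteq\mathbb N$ containing $0$, closed under addition, with finite complement; $S^*=S\setminus\{0\}$, $m=\min S^*$, $X=\{s\in S^*: s-m\notin S\}$. The graph $G(S)$ has edge set all subsets $\{x,y\}\subseteq X$ ($x=y$ allowed) with $x+y\in X$, and vertex set $V$ the endvertices of these edges. For $u\in S^*$, a proper factor of $u$ is $v\in S^*$ with $u-v\in S^*$. A downset in $S^*$ is a subset $I\subseteq S^*$ such that every proper factor of an element of $I$ lies in $I$. *)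

From mathcomp Require Import all_boot.
Set Implicit Arguments. Unset Strict Implicit. Unset Printing Implicit Defensive.

Definition numerical_semigroup (S : nat -> Prop) : Prop :=
  [/\ S 0,
      (forall a b, S a -> S b -> S (a + b)) &
      (exists N, forall n, N <= n -> S n)].

Definition Sstar (S : nat -> Prop) (x : nat) : Prop := S x /\ 0 < x.

Definition is_multiplicity (S : nat -> Prop) (m : nat) : Prop :=
  Sstar S m /\ forall s, Sstar S s -> m <= s.

(* X = { s in S^* : s - m \notin S }, where s - m is the integer difference
   (a negative integer is never in S). *)
Definition Apery_nz (S : nat -> Prop) (m : nat) (s : nat) : Prop :=
  Sstar S s /\ ~ (m <= s /\ S (s - m)).

Definition Dsum (S : nat -> Prop) (z : nat) : Prop :=
  exists a b, Sstar S a /\ Sstar S b /\ z = a + b.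

Definition proper_factor (S : nat -> Prop) (v u : nat) : Prop :=
  Sstar S v /\ v < u /\ Sstar S (u - v).

Definition downset (S : nat -> Prop) (I : nat -> Prop) : Prop :=
  (forall x, I x -> Sstar S x) /\
  (forall u v, I u -> proper_factor S v u -> I v).

Definition GS_edge (S : nat -> Prop) (m x y : nat) : Prop :=
  Apery_nz S m x /\ Apery_nz S m y /\ Apery_nz S m (x + y).

Definition GS_vertex (S : nat -> Prop) (m v : nat) : Prop :=
  exists y, GS_edge S m v y.

From mathcomp Require Import all_boot.
From mathcomp Require Import zify.

(* If a + b lies in X and b lies in S, then so does a: were a - m in S, then
   (a + b) - m = (a - m) + b would be in S too.  Hence v is a vertex of G(S)
   exactly when v + y lies in X for some y in S^*, i.e. when v is a proper
   factor of an element of X, and such an element is automatically in D.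
   Being a proper factor is transitive, which gives the downset property. *)

Section AperyGraph.

Variables (S : nat -> Prop) (m : nat).
Hypothesis addS : forall a b, S a -> S b -> S (a + b).

Lemma Sstar_add a b : Sstar S a -> Sstar S b -> Sstar S (a + b).
Proof. by move=> [Sa a_gt0] [Sb _]; split; [exact: addS | lia]. Qed.

Lemma Apery_nz_addl a b :
  Sstar S a -> S b -> Apery_nz S m (a + b) -> Apery_nz S m a.
Proof.
move=> Sa Sb [_ notS_abm]; split => // [[le_ma Sam]].
apply: notS_abm; split; first by lia.
have -> : a + b - m = (a - m) + b by lia.
exact: addS.
Qed.

Lemma GS_vertexP v :
  GS_vertex S m v <->
  exists y, [/\ Sstar S v, Sstar S y & Apery_nz S m (v + y)].
Proof.
split=> [[y [Xv [Xy Xvy]]] | [y [Sv Sy Xvy]]].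
  by exists y; split; [case: Xv | case: Xy | ].
have [[S_v _] [S_y _]] := (Sv, Sy).
exists y; split; first exact: Apery_nz_addl Sv S_y Xvy.
split => //; apply: Apery_nz_addl Sy S_v _.
by rewrite addnC.
Qed.

Lemma proper_factor_Dsum v z : proper_factor S v z -> Dsum S z.
Proof. by move=> [Sv [lt_vz Szv]]; exists v, (z - v); split => //; split => //; lia. Qed.

Lemma GS_vertex_proper_factor v :
  GS_vertex S m v <-> exists z, Apery_nz S m z /\ proper_factor S v z.
Proof.
rewrite GS_vertexP; split=> [[y [Sv Sy Xvy]] | [z [Xz [Sv [lt_vz Szv]]]]].
  exists (v + y); split => //; split => //.
  have [_ y_gt0] := Sy.
  by rewrite addKn; split => //; lia.
by exists (z - v); split => //; rewrite subnKC // ltnW.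
Qed.

Lemma GS_vertex_downset : downset S (GS_vertex S m).
Proof.
split=> [x [y [[Sx _] _]] | u v] //.
rewrite !GS_vertexP => -[y [Su Sy Xuy]] [Sv [lt_vu Suv]].
exists (u - v + y); split => //; first exact: Sstar_add.
by rewrite addnA subnKC // ltnW.
Qed.

End AperyGraph.

Theorem lemma4p4 (S : nat -> Prop) (m : nat) :
  numerical_semigroup S -> is_multiplicity S m ->
  downset S (GS_vertex S m) /\
  (forall v, GS_vertex S m v <->
     exists z, Apery_nz S m z /\ Dsum S z /\ proper_factor S v z).
Proof.
move=> [_ addS _] _; split; first exact: GS_vertex_downset.
move=> v; rewrite GS_vertex_proper_factor //.
split=> [[z [Xz vz]] | [z [Xz [_ vz]]]]; exists z => //.
by split; [| split; first exact: proper_factor_Dsum vz].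
Qed.
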